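(* Let $n, d, d_k$ be positive integers. For a real $n\times n$ matrix $M$, let $\mathrm{softmax}(M)$ denote the row-wise softmax, $(\mathrm{softmax}(M))_{ij} = \exp(M_{ij}) / \sum_{k=1}^n \exp(M_{ik})$, and for a matrix $A$ with strictly positive entries let $\log(A)$ denote the entrywise natural logarithm. A row-stochastic matrix is a real square matrix with nonnegative entries whose rows each sum to $1$. (1) Let $N$ be a positive integer and let $X_1, \dots, X_N \in \mathbb{R}^{n\times d}$ be pairwise distinct matrices. Let $A_1, \dots, A_N \in \mathbb{R}^{n\times n}$ be row-stochastic matrices with strictly positive entries such that $\mathrm{rank}(\log(A_m)) \le d_k$ for every $m = 1, \dots, N$. Then there exist maps $Q, K : \mathbb{R}^{n\times d} \to \mathbb{R}^{n\times d_k}$ such that $$\mathrm{softmax}\!\left(\frac{Q(X_m)K(X_m)^\top}{\sqrt{d_k}}\right) = A_m \quad \text{for all } m = 1, \dots, N.$$ (2) Suppose $d < n-1$ and let $X \in \mathbb{R}^{n\times d}$. Then there exists a row-stochastic matrix $A \in \mathbb{R}^{n\times n}$ with strictly positive entries and $\mathrm{rank}(\log(A)) = 1$ such that there are no matrices $W_q, W_k \in \mathbb{R}^{d\times d_k}$ satisfying $$\mathrm{softmax}\!\left(\frac{(XW_q)(XW_k)^\top}{\sqrt{d_k}}\right) = A.$$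
   Context: This formalizes the ''low-rank/linear bottleneck'' of standard dot-product attention: with linear query/key maps $Q(X) = XW_q$, $K(X) = XW_k$, the attention matrix is $\mathrm{softmax}(QK^\top/\sqrt{d_k})$ computed row-wise. *)

From mathcomp Require Import all_boot all_order all_algebra.
From mathcomp Require Import reals.
From mathcomp Require Import sequences exp.
Set Implicit Arguments. Unset Strict Implicit. Unset Printing Implicit Defensive.
Import Order.TTheory GRing.Theory Num.Theory.
Local Open Scope ring_scope.

Definition softmax (R : realType) (n : nat) (M : 'M[R]_n) : 'M[R]_n :=
  \matrix_(i, j) (expR (M i j) / \sum_(k < n) expR (M i k)).

Definition mx_log (R : realType) (m n : nat) (A : 'M[R]_(m, n)) : 'M[R]_(m, n) :=
  map_mx (@ln R) A.

Definition row_stochastic (R : realType) (n : nat) (A : 'M[R]_n) : Prop :=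
  (forall i j, 0 <= A i j) /\ (forall i, \sum_(j < n) A i j = 1).

Definition entrywise_pos (R : realType) (m n : nat) (A : 'M[R]_(m, n)) : Prop :=
  forall i j, 0 < A i j.

Definition attention (R : realType) (n dk : nat) (Q K : 'M[R]_(n, dk)) : 'M[R]_n :=
  softmax ((Num.sqrt (dk%:R : R))^-1 *: (Q *m K^T)).

(* For (1), the inverse of softmax on positive row-stochastic matrices is the
   entrywise logarithm, and a matrix of rank at most dk factors as U V^T with
   dk columns; since the inputs X_m are distinct, U and V can be chosen
   independently for each X_m.
   For (2), softmax determines its argument up to adding a constant to each
   row.  As d + 1 < n, some nonzero row vector z kills both X and the all-ones
   column.  Take A = softmax of the matrix all of whose rows are z; its log has
   rank 1.  If softmax (c X Wq Wk^T X^T) = A, then c X Wq Wk^T X^T differs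
   from that matrix by a constant on each row; multiplying on the right by
   z^T, which kills X^T and the all-ones row, leaves z z^T = 0. *)
From mathcomp Require Import all_boot all_order all_algebra.
From mathcomp Require Import reals.
From mathcomp Require Import sequences exp.
From mathcomp Require Import lra zify.
Set Implicit Arguments. Unset Strict Implicit. Unset Printing Implicit Defensive.
Import Order.TTheory GRing.Theory Num.Theory.
Local Open Scope ring_scope.

Lemma extend_along_injective (I : finType) (T : eqType) (U : Type)
    (i0 : I) (X : I -> T) (f : I -> U) :
  injective X -> exists g : T -> U, forall i, g (X i) = f i.
Proof.
move=> Xinj; exists (fun t => f (odflt i0 [pick i | X i == t])) => i.
by case: pickP => [j /eqP/Xinj -> // | /(_ i)]; rewrite eqxx.
Qed.

Lemma mxrank_factor (F : fieldType) m n k (L : 'M[F]_(m, n)) :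
  (\rank L <= k)%N -> exists (U : 'M_(m, k)) (V : 'M_(k, n)), L = U *m V.
Proof.
move=> rLk; exists (col_ebase L *m pid_mx (\rank L)).
exists (pid_mx (\rank L) *m row_ebase L).
by rewrite mulmxA -(mulmxA (col_ebase L)) mul_pid_mx minnn (minn_idPr rLk)
           mulmx_ebase.
Qed.

Lemma nonzero_left_kernel (F : fieldType) m n (B : 'M[F]_(n, m)) :
  (m < n)%N -> exists2 z : 'rV_n, z != 0 & z *m B = 0.
Proof.
move=> lt_mn; have /rowV0Pn [z /sub_kermxP zB z0] : kermx B != 0.
  by rewrite kermx_eq0 -row_leq_rank -ltnNge (leq_ltn_trans (rank_leq_col B)).
by exists z.
Qed.

Lemma rV_dot_self_eq0 (R : realDomainType) n (v : 'rV[R]_n) :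
  (v *m v^T) 0 0 = 0 -> v = 0.
Proof.
rewrite mxE => /psumr_eq0P vv0; apply/rowP => j; rewrite mxE.
have /eqP : v 0 j * v^T j 0 = 0 by apply: vv0 => // k _; rewrite mxE -expr2 sqr_ge0.
by rewrite mxE mulf_eq0 orbb => /eqP.
Qed.

Section Softmax.
Variables (R : realType) (n : nat).
Implicit Types (M P : 'M[R]_n) (A : 'M[R]_n) (w : 'rV[R]_n).

Lemma sumr_expR_gt0 M i : 0 < \sum_(k < n) expR (M i k).
Proof.
rewrite (bigD1 i) //= ltr_pwDl ?expR_gt0 //.
by apply: sumr_ge0 => k _; apply/ltW/expR_gt0.
Qed.

Lemma softmax_gt0 M : entrywise_pos (softmax M).
Proof. by move=> i j; rewrite mxE divr_gt0 ?expR_gt0 ?sumr_expR_gt0. Qed.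

Lemma softmax_row_stochastic M : row_stochastic (softmax M).
Proof.
split=> [i j | i]; first exact/ltW/softmax_gt0.
under eq_bigr do rewrite mxE.
by rewrite -mulr_suml mulfV // gt_eqF // sumr_expR_gt0.
Qed.

Lemma ln_softmax M i j :
  ln (softmax M i j) = M i j - ln (\sum_(k < n) expR (M i k)).
Proof.
rewrite mxE lnM ?posrE ?expR_gt0 ?invr_gt0 ?sumr_expR_gt0 //.
by rewrite lnV ?posrE ?sumr_expR_gt0 // expRK.
Qed.

Lemma softmax_mx_log A :
  row_stochastic A -> entrywise_pos A -> softmax (mx_log A) = A.
Proof.
move=> [_ A1] A_gt0; apply/matrixP => i j; rewrite mxE.
under eq_bigr do rewrite mxE lnK ?posrE ?A_gt0 //.
by rewrite A1 divr1 mxE lnK ?posrE ?A_gt0.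
Qed.

Lemma softmax_eq_shift P M :
  softmax P = softmax M -> exists c : 'cV_n, P = M + c *m const_mx 1.
Proof.
move=> PM; exists (\col_i (ln (\sum_(k < n) expR (P i k))
                          - ln (\sum_(k < n) expR (M i k)))).
apply/matrixP => i j; have := ln_softmax P i j; rewrite PM ln_softmax.
by rewrite !mxE big_ord1 !mxE mulr1; lra.
Qed.

Lemma mx_log_softmax_neq0 M : (1 < n)%N -> mx_log (softmax M) != 0.
Proof.
move=> n_gt1; apply/eqP => logM0; pose i0 : 'I_n := Ordinal (ltnW n_gt1).
have M1 j : softmax M i0 j = 1.
  rewrite -[LHS]lnK ?posrE ?softmax_gt0 //.
  have := congr1 (fun B : 'M_n => B i0 j) logM0.
  by rewrite !mxE => ->; rewrite expR0.
have := (softmax_row_stochastic M).2 i0.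
under eq_bigr do rewrite M1.
by rewrite sumr_const card_ord => /eqP; rewrite pnatr_eq1 => /eqP n1; lia.
Qed.

Lemma rank_mx_log_softmax_const_rows w :
  (1 < n)%N -> \rank (mx_log (softmax (const_mx 1 *m w))) = 1%N.
Proof.
move=> n_gt1; apply/anti_leq/andP; split; last first.
  by rewrite lt0n mxrank_eq0 mx_log_softmax_neq0.
pose S := \sum_(k < n) expR (w 0 k).
have -> : mx_log (softmax (const_mx 1 *m w)) =
          (const_mx 1 : 'cV_n) *m \row_j (w 0 j - ln S).
  apply/matrixP => i j; rewrite mxE ln_softmax !mxE !big_ord1 !mxE !mul1r.
  by congr (_ - ln _); apply: eq_bigr => k _; rewrite mxE big_ord1 !mxE mul1r.
exact: leq_trans (mxrankM_maxr _ _) (rank_leq_row _).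
Qed.

Lemma softmax_const_rows_kernel P w :
  P *m w^T = 0 -> w *m (const_mx 1 : 'cV_n) = 0 ->
  softmax P = softmax (const_mx 1 *m w) -> w = 0.
Proof.
move=> Pw w1 /softmax_eq_shift [c P_def]; apply/rowP => j.
have w1T : (const_mx 1 : 'rV_n) *m w^T = 0.
  by rewrite -[LHS]trmxK trmx_mul trmxK trmx_const w1 trmx0.
have ww : (const_mx 1 : 'cV_n) *m (w *m w^T) = 0.
  by move: Pw; rewrite P_def mulmxDl -!mulmxA w1T mulmx0 addr0.
suff /rV_dot_self_eq0 -> : (w *m w^T) 0 0 = 0 by rewrite mxE.
by have := congr1 (fun B : 'cV_n => B j 0) ww; rewrite !mxE big_ord1 !mxE mul1r.
Qed.

End Softmax.

Lemma attention_sqrt_scaled (R : realType) n dk (U V : 'M[R]_(n, dk)) :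
  (0 < dk)%N -> attention (Num.sqrt dk%:R *: U) V = softmax (U *m V^T).
Proof.
move=> dk_gt0; rewrite /attention -scalemxAl scalerA mulVf ?scale1r //.
by rewrite gt_eqF // sqrtr_gt0 ltr0n.
Qed.

Lemma linear_attention_kernel (R : comPzRingType) n d dk (X : 'M[R]_(n, d))
    (Wq Wk : 'M[R]_(d, dk)) (a : R) (z : 'rV[R]_n) :
  z *m X = 0 -> (a *: (X *m Wq *m (X *m Wk)^T)) *m z^T = 0.
Proof.
move=> zX; rewrite -scalemxAl trmx_mul -!mulmxA -trmx_mul zX trmx0.
by rewrite !mulmx0 scaler0.
Qed.

Theorem theorem1 (R : realType) (n d dk : nat) :
  (0 < n)%N -> (0 < d)%N -> (0 < dk)%N ->
  (* (1) arbitrary maps Q, K can realize any finite family of low-rank-log targets *)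
  (forall (N : nat) (X : 'I_N -> 'M[R]_(n, d)) (A : 'I_N -> 'M[R]_n),
      (0 < N)%N ->
      injective X ->
      (forall m, row_stochastic (A m)) ->
      (forall m, entrywise_pos (A m)) ->
      (forall m, (\rank (mx_log (A m)) <= dk)%N) ->
      exists Q K : 'M[R]_(n, d) -> 'M[R]_(n, dk),
        forall m, attention (Q (X m)) (K (X m)) = A m)
  /\
  (* (2) linear query/key maps cannot realize some rank-1-log target *)
  ((d < n.-1)%N ->
   forall X : 'M[R]_(n, d),
     exists A : 'M[R]_n,
       [/\ row_stochastic A, entrywise_pos A, \rank (mx_log A) = 1%N &
        ~ exists Wq Wk : 'M[R]_(d, dk), attention (X *m Wq) (X *m Wk) = A]).
Proof.
move=> _ d_gt0 dk_gt0; split=> [N X A N_gt0 Xinj A_st A_gt0 A_rank | lt_d_n X].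
  have factor m : exists UV : 'M_(n, dk) * 'M_(dk, n), mx_log (A m) = UV.1 *m UV.2.
    by have [U [V ->]] := mxrank_factor (A_rank m); exists (U, V).
  have [UV logA] := fin_all_exists factor.
  have [g gX] := extend_along_injective (Ordinal N_gt0) UV Xinj.
  exists (fun Y => Num.sqrt dk%:R *: (g Y).1), (fun Y => (g Y).2^T) => m.
  by rewrite attention_sqrt_scaled // trmxK gX -logA softmax_mx_log.
have [|z z0] := nonzero_left_kernel (row_mx X (const_mx 1 : 'cV[R]_n)).
  lia.
rewrite mul_mx_row -row_mx0 => /eq_row_mx [zX z1].
exists (softmax (const_mx 1 *m z)); split.
- exact: softmax_row_stochastic.
- exact: softmax_gt0.
- by rewrite rank_mx_log_softmax_const_rows //; lia.
- case=> Wq [Wk attA]; move/eqP: z0; apply.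
  exact: softmax_const_rows_kernel (linear_attention_kernel Wq Wk _ zX) z1 attA.
Qed.
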